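(* Let $X$ be a complex Banach space, $\mathcal{F}$ an algebra with unit, $\Phi:\mathcal{F}\to\mathcal{C}(X)$ a calculus, and $\mathcal{E}\subseteq\mathrm{bdd}(\mathcal{F},\Phi)$ such that $\mathrm{bdd}(\mathcal{F},\Phi)$ is anchored in $\mathcal{E}$. Then $\mathcal{E}$ determines $\Phi$ on $\mathcal{F}$. If, in addition, $\mathcal{E}$ is multiplicative (closed under products), then $\mathcal{E}$ is an algebraic core for $\Phi$.
   Context: $\mathcal{F}$ need not be commutative. $\mathcal{L}(X)$, $\mathcal{C}(X)$: bounded, resp. closed linear operators on $X$; operator inclusions are graph inclusions, sums/products have natural domains, ''$Tx=y$'' means $x\in\mathrm{dom}(T)$, $Tx=y$. A proto-calculus is a map $\Phi:\mathcal{F}\to\mathcal{C}(X)$ with (FC1) $\Phi(\mathbf{1})=I$; (FC2) $\lambda\Phi(f)\subseteq\Phi(\lambda f)$, $\Phi(f)+\Phi(g)\subseteq\Phi(f+g)$; (FC3) $\Phi(f)\Phi(g)\subseteq\Phi(fg)$ with $\mathrm{dom}(\Phi(f)\Phi(g))=\mathrm{dom}(\Phi(g))\cap\mathrm{dom}(\Phi(fg))$. $\mathrm{bdd}(\mathcal{F},\Phi)=\{f:\Phi(f)\in\mathcal{L}(X)\}$. For a subset $\mathcal{E}\subseteq\mathcal{F}$ and $f\in\mathcal{F}$, $[f]_{\mathcal{E}}=\{e\in\mathcal{E}: ef\in\mathcal{E}\}$; $\mathrm{reg}(f,\Phi)=[f]_{\mathrm{bdd}(\mathcal{F},\Phi)}$.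 A subset $\mathcal{M}\subseteq\mathrm{bdd}(\mathcal{F},\Phi)$ determines $\Phi$ at $f$ if for all $x,y$: $\Phi(f)x=y\iff\Phi(ef)x=\Phi(e)y$ for all $e\in\mathcal{M}\cap\mathrm{reg}(f,\Phi)$; it determines $\Phi$ on $\mathcal{F}$ if it does so at every $f$. $\mathcal{E}\subseteq\mathrm{bdd}(\mathcal{F},\Phi)$ is an algebraic core for $\Phi$ if for every $f\in\mathcal{F}$: $\Phi(f)x=y\iff\Phi(ef)x=\Phi(e)y$ for all $e\in[f]_{\mathcal{E}}$. A calculus is a proto-calculus such that $\mathrm{bdd}(\mathcal{F},\Phi)$ determines $\Phi$ on $\mathcal{F}$. A nonempty $\mathcal{M}\subseteq\mathrm{bdd}(\mathcal{F},\Phi)$ is an anchor set if $\bigcap_{e\in\mathcal{M}}\ker\Phi(e)=\{0\}$; $g$ is anchored in $\mathcal{E}$ if $[g]_{\mathcal{E}}$ is an anchor set, and a set is anchored in $\mathcal{E}$ if each of its elements is. *)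

From HB Require Import structures.
From mathcomp Require Import all_boot all_order all_algebra.
From mathcomp Require Import all_classical all_reals.
From mathcomp Require Import topology normedtype.
From mathcomp Require Import complex.
Set Implicit Arguments. Unset Strict Implicit. Unset Printing Implicit Defensive.
Import Order.TTheory GRing.Theory Num.Theory.
Import numFieldNormedType.Exports.
Local Open Scope classical_set_scope.
Local Open Scope ring_scope.
Local Open Scope complex_scope.

Section Ops.
Variables (R : realType) (X : normedModType R[i]).

(* A (possibly unbounded, partially defined) operator on X, given by its graph:
   [T x y] means "x \in dom T and T x = y". *)
Definition op := X -> X -> Prop.

Definition op_dom (T : op) : set X := [set x | exists y, T x y].

Definition op_incl (S T : op) : Prop := forall x y, S x y -> T x y.
Definition op_eq (S T : op) : Prop := forall x y, S x y <-> T x y.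

Definition op_id : op := fun x y => y = x.
Definition op_scale (l : R[i]) (T : op) : op := fun x y => exists z, T x z /\ y = l *: z.
Definition op_add (S T : op) : op := fun x y => exists z w, S x z /\ T x w /\ y = z + w.
Definition op_comp (S T : op) : op := fun x y => exists z, T x z /\ S z y.

Definition linear_op (T : op) : Prop :=
  [/\ (forall x y y', T x y -> T x y' -> y = y'),
      T 0 0,
      (forall x y x' y', T x y -> T x' y' -> T (x + x') (y + y')) &
      (forall (l : R[i]) x y, T x y -> T (l *: x) (l *: y))].

Definition closed_op (T : op) : Prop :=
  linear_op T /\ closed [set p : X * X | T p.1 p.2].

Definition bounded_op (T : op) : Prop :=
  [/\ linear_op T, (forall x, exists y, T x y) &
      exists M : R[i], 0 <= M /\ forall x y, T x y -> `|y| <= M * `|x|].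

Definition kernel (T : op) : set X := [set x | T x 0].
End Ops.

Section Calculus.
Variables (R : realType) (X : normedModType R[i]) (F : algType R[i]).
Variable Phi : F -> op X.

Definition proto_calculus : Prop :=
  [/\ forall f, closed_op (Phi f),
      op_eq (Phi 1) (@op_id R X),
      (forall (l : R[i]) f, op_incl (op_scale l (Phi f)) (Phi (l *: f))) /\
      (forall f g, op_incl (op_add (Phi f) (Phi g)) (Phi (f + g))) &
      forall f g, op_incl (op_comp (Phi f) (Phi g)) (Phi (f * g)) /\
        (forall x, op_dom (op_comp (Phi f) (Phi g)) x <->
                   op_dom (Phi g) x /\ op_dom (Phi (f * g)) x)].

Definition bdd : set F := [set f | bounded_op (Phi f)].

Definition bracket (E : set F) (f : F) : set F := [set e | E e /\ E (e * f)].

Definition reg (f : F) : set F := bracket bdd f.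

Definition det_eq (e f : F) (x y : X) : Prop :=
  exists z, Phi e y z /\ Phi (e * f) x z.

Definition determines_at (M : set F) (f : F) : Prop :=
  M `<=` bdd /\
  forall x y, Phi f x y <-> (forall e, M e -> reg f e -> det_eq e f x y).

Definition determines (M : set F) : Prop := forall f, determines_at M f.

Definition algebraic_core (E : set F) : Prop :=
  E `<=` bdd /\
  forall f x y, Phi f x y <-> (forall e, bracket E f e -> det_eq e f x y).

Definition calculus : Prop := proto_calculus /\ determines bdd.

Definition anchor_set (M : set F) : Prop :=
  [/\ M !=set0, M `<=` bdd &
      forall x, (forall e, M e -> kernel (Phi e) x) -> x = 0].

Definition anchored_in (E : set F) (g : F) : Prop := anchor_set (bracket E g).
Definition set_anchored_in (S E : set F) : Prop := forall g, S g -> anchored_in E g.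

Definition multiplicative (E : set F) : Prop :=
  forall e1 e2, E e1 -> E e2 -> E (e1 * e2).
End Calculus.

From Pilot Require Import Defs.
From mathcomp Require Import all_boot all_order all_algebra.
From mathcomp Require Import all_classical all_reals.
From mathcomp Require Import topology normedtype.
From mathcomp Require Import complex.
Local Open Scope classical_set_scope.
Local Open Scope ring_scope.

(* If Phi(f) x = y and e is bounded, then Phi(e f) x = Phi(e) y by (FC3), so the
   determination conditions are always necessary.  Conversely, if g is bounded
   together with g f, the vectors u = Phi(g f) x and v = Phi(g) y satisfy
   Phi(k) u = Phi(k g f) x and Phi(k) v = Phi(k g) y for every bounded k; when
   these agree for all k in an anchor set, u - v lies in the common kernel,
   so u = v.  For g in reg(f) the anchor set [g]_E (resp. [g f]_E when E is
   multiplicative) consists of k with k g in E and k g f bounded (resp. in E),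
   which reduces determination by bdd(F, Phi) to determination by E (resp. by
   [f]_E). *)

Section ProtoCalculus.
Set Implicit Arguments.
Import Order.TTheory GRing.Theory Num.Theory.
Variables (R : realType) (X : normedModType R[i]) (F : algType R[i]).
Variable Phi : F -> op X.
Hypothesis Phi_proto : proto_calculus Phi.

Lemma Phi_functional f x y y' : Phi f x y -> Phi f x y' -> y = y'.
Proof.
by case: Phi_proto => closedPhi _ _ _; case: (closedPhi f) => [[functional _ _ _] _];
  apply: functional.
Qed.

Lemma Phi_sub f x y x' y' :
  Phi f x y -> Phi f x' y' -> Phi f (x - x') (y - y').
Proof.
case: Phi_proto => closedPhi _ _ _; case: (closedPhi f) => [[_ _ addP scaleP] _].
move=> fxy fxy'; rewrite -[- x']scaleN1r -[- y']scaleN1r.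
by apply: addP => //; apply: scaleP.
Qed.

Lemma Phi_mul f g x z w : Phi g x z -> Phi f z w -> Phi (f * g) x w.
Proof. by case: Phi_proto => _ _ _ mulP gxz fzw; apply: (mulP f g).1; exists z. Qed.

Lemma bdd_mul f g : bdd Phi f -> bdd Phi g -> bdd Phi (f * g).
Proof.
move=> [_ totf [Mf [Mf_ge0 normf]]] [_ totg [Mg [Mg_ge0 normg]]].
have Phi_fg x : exists2 z, Phi g x z & exists w, Phi f z w /\ Phi (f * g) x w.
  have [z gxz] := totg x; have [w fzw] := totf z.
  by exists z => //; exists w; split => //; apply: Phi_mul gxz fzw.
split.
- by case: Phi_proto => closedPhi _ _ _; case: (closedPhi (f * g)).
- by move=> x; have [z _ [w [_ fgxw]]] := Phi_fg x; exists w.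
- exists (Mf * Mg); split; first exact: mulr_ge0.
  move=> x y fgxy; have [z gxz [w [fzw fgxw]]] := Phi_fg x.
  rewrite (Phi_functional fgxy fgxw) -mulrA.
  by apply: le_trans (normf _ _ fzw) _; apply: ler_wpM2l => //; apply: normg.
Qed.

Lemma det_eq_of_graph e f x y : bdd Phi e -> Phi f x y -> det_eq Phi e f x y.
Proof.
move=> [_ tote _] fxy; have [z eyz] := tote y.
by exists z; split => //; apply: Phi_mul fxy eyz.
Qed.

Lemma anchor_set_separates (A : set F) u v :
  anchor_set Phi A -> (forall k, A k -> exists c, Phi k u c /\ Phi k v c) -> u = v.
Proof.
move=> [_ _ kerA] agree; apply/eqP; rewrite -subr_eq0; apply/eqP/kerA => k Ak.
have [c [kuc kvc]] := agree k Ak.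
by have := Phi_sub kuc kvc; rewrite subrr.
Qed.

Lemma det_eq_of_anchor_set (A : set F) g f x y :
  bdd Phi g -> bdd Phi (g * f) -> anchor_set Phi A ->
  (forall k, A k -> det_eq Phi (k * g) f x y) -> det_eq Phi g f x y.
Proof.
move=> [_ totg _] [_ totgf _] anchorA detA.
have [v gyv] := totg y; have [u gfxu] := totgf x.
exists v; split => //; suff -> : v = u by [].
apply: (anchor_set_separates anchorA) => k Ak.
have [_ A_bdd _] := anchorA; have [_ totk _] := A_bdd k Ak.
have [c [kgyc kgfxc]] := detA k Ak; exists c.
have [a kva] := totk v; have [b kub] := totk u.
rewrite -mulrA in kgfxc.
rewrite {1}(Phi_functional kgyc (Phi_mul gyv kva)).
by rewrite (Phi_functional kgfxc (Phi_mul gfxu kub)).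
Qed.

Variable E : set F.
Hypotheses (E_bdd : E `<=` bdd Phi) (bdd_anchored : set_anchored_in Phi (bdd Phi) E).

Lemma determines_of_anchored : determines Phi (bdd Phi) -> determines Phi E.
Proof.
move=> bdd_det f; split => // x y; split.
  by move=> fxy e Ee [_ _]; apply: det_eq_of_graph (E_bdd Ee) fxy.
move=> detE; apply/((bdd_det f).2 x y) => g bddg [_ bddgf].
apply: (det_eq_of_anchor_set bddg bddgf (bdd_anchored bddg)) => k [Ek Ekg].
apply: detE => //; split; first exact: E_bdd.
by rewrite -mulrA; apply: bdd_mul => //; apply: E_bdd.
Qed.

(* Qualified: GRing.Theory also exports a [multiplicative]. *)
Lemma algebraic_core_of_anchored :
  determines Phi E -> Defs.multiplicative E -> algebraic_core Phi E.
Proof.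
move=> E_det E_mul; split => // f x y; split.
  by move=> fxy e [Ee _]; apply: det_eq_of_graph (E_bdd Ee) fxy.
move=> detE; apply/((E_det f).2 x y) => h Eh [bddh bddhf].
apply: (det_eq_of_anchor_set bddh bddhf (bdd_anchored bddhf)) => k [Ek Ekhf].
by apply: detE; split; [apply: E_mul | rewrite -mulrA].
Qed.

End ProtoCalculus.

Theorem theorem4p2 (R : realType) (X : completeNormedModType R[i])
    (F : algType R[i]) (Phi : F -> op X) (E : set F) :
  calculus Phi ->
  E `<=` bdd Phi ->
  set_anchored_in Phi (bdd Phi) E ->
  determines Phi E /\ (multiplicative E -> algebraic_core Phi E).
Proof.
move=> [Phi_proto bdd_det] E_bdd bdd_anchored.
have E_det := determines_of_anchored Phi_proto E_bdd bdd_anchored bdd_det.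
by split => // /(algebraic_core_of_anchored Phi_proto E_bdd bdd_anchored E_det).
Qed.
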